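(* Let $(\mathcal S,\gamma)$ be an IFS quasiarc with similarity dimension $s$, and let $\phi:[0,1]\to\gamma$ be its Hutchinson parameterization. Then for all $u,v\in[0,1]$ with $u\le v$, $$\mathcal H^s(\phi([u,v]))=\mathcal H^s(\gamma)\,|u-v|,$$ where $\mathcal H^s$ is $s$-dimensional Hausdorff measure.
   Context: $\mathcal S=\{S_1,\dots,S_N\}$, $N\ge2$, contracting similarities of $\mathbb{R}^n$ with ratios $r_i\in(0,1)$, invariant set $\gamma$ (unique nonempty compact set with $\gamma=\bigcup_iS_i(\gamma)$). IFS path: there are $a,b$ with $S_1(a)=a$, $S_N(b)=b$, $S_i(b)=S_{i+1}(a)$ for $i=1,\dots,N-1$. IFS arc: moreover $S_i(\gamma)\cap S_{i+1}(\gamma)=\{S_{i+1}(a)\}$ and $S_i(\gamma)\cap S_j(\gamma)=\emptyset$ for $i,j\in\{1,\dots,N\}$, $|i-j|>1$. IFS quasiarc: moreover $\gamma$ is quasisymmetrically equivalent to $[0,1]$. Similarity dimension: $s>0$ with $\sum_ir_i^s=1$. Hutchinson parameterization: $t_0=0$, $t_i=t_{i-1}+r_i^s$, $s_i(t)=t\,t_i+(1-t)t_{i-1}$; $S_\sigma=S_{\sigma_1}\circ\cdots\circ S_{\sigma_k}$, $s_\sigma$ likewise; $\phi_0(t)=a+t(b-a)$, $\phi_k(t)=S_\sigma\circ\phi_0\circ s_\sigma^{-1}(t)$ on $s_\sigma([0,1])$, $\sigma\in\{1,\dots,N\}^k$; $\phi$ is the uniform limit of the $\phi_k$. *)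

(* MathComp + MathComp-Analysis, over an abstract R : realType.
   Points of R^n are row vectors 'rV[R]_n with the EUCLIDEAN distance edist. *)
From HB Require Import structures.
From mathcomp Require Import all_boot all_order all_algebra.
From mathcomp Require Import all_classical all_reals all_analysis.
Set Implicit Arguments. Unset Strict Implicit. Unset Printing Implicit Defensive.
Import Order.TTheory GRing.Theory Num.Theory.
Import numFieldNormedType.Exports.
Local Open Scope classical_set_scope.
Local Open Scope ring_scope.

Section Defs.
Context {R : realType} {n : nat}.
Local Notation V := 'rV[R]_n.

Definition edist (x y : V) : R :=
  Num.sqrt (\sum_(i < n) (x ord0 i - y ord0 i) ^+ 2).

Definition similarity (f : V -> V) (r : R) : Prop :=
  forall x y, edist (f x) (f y) = r * edist x y.

(* Diameter (Euclidean); diam of the empty set is -oo, used as 0 below via fine *)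
Definition ediam (A : set V) : \bar R :=
  ereal_sup [set z | exists x y, A x /\ A y /\ z = (edist x y)%:E].

Definition hausdorff_content (s delta : R) (A : set V) : \bar R :=
  ereal_inf [set (\sum_(0 <= k <oo) ((fine (ediam (U k))) `^ s)%:E)%E
            | U in [set U : nat -> set V |
                     A `<=` \bigcup_k U k /\ forall k, (ediam (U k) <= delta%:E)%E]].

Definition hausdorff_measure (s : R) (A : set V) : \bar R :=
  ereal_sup [set hausdorff_content s delta A | delta in [set d : R | 0 < d]].

Variables (N : nat) (S : 'I_N -> V -> V).

Definition IFS_invariant (gamma : set V) : Prop :=
  gamma !=set0 /\ compact gamma /\ gamma = \bigcup_(i in [set: 'I_N]) (S i @` gamma).

(* IFS path with endpoints a, b (index i of the paper is the ordinal i-1) *)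
Definition IFS_path (a b : V) : Prop :=
  [/\ forall i : 'I_N, val i = 0%N -> S i a = a,
      forall i : 'I_N, val i = N.-1 -> S i b = b
    & forall i j : 'I_N, val j = (val i).+1 -> S i b = S j a].

Definition IFS_arc (gamma : set V) (a b : V) : Prop :=
  [/\ IFS_path a b,
      forall i j : 'I_N, val j = (val i).+1 -> S i @` gamma `&` S j @` gamma = [set S j a]
    & forall i j : 'I_N, ((val i).+1 < val j)%N \/ ((val j).+1 < val i)%N ->
        S i @` gamma `&` S j @` gamma = set0].

Definition homeo_halfline (eta : R -> R) : Prop :=
  {within `[0, +oo[, continuous eta} /\ set_bij `[0, +oo[ `[0, +oo[ eta.

Definition quasisymmetric01 (f : R -> V) : Prop :=
  exists eta : R -> R, homeo_halfline eta /\
    forall x y z t : R, x \in `[0, 1] -> y \in `[0, 1] -> z \in `[0, 1] -> 0 <= t ->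
      `|x - y| <= t * `|x - z| -> edist (f x) (f y) <= eta t * edist (f x) (f z).

Definition qs_equiv01 (gamma : set V) : Prop :=
  exists f : R -> V, {within `[0, 1], continuous f} /\ set_bij `[0, 1] gamma f
                     /\ quasisymmetric01 f.

Definition IFS_quasiarc (gamma : set V) (a b : V) : Prop :=
  IFS_arc gamma a b /\ qs_equiv01 gamma.

Variables (r : 'I_N -> R) (s : R).

(* t_i = r_1^s + ... + r_i^s *)
Definition tpt (i : nat) : R := \sum_(j < N | (j < i)%N) (r j) `^ s.

(* s_i(t) = t t_i + (1 - t) t_{i-1} *)
Definition sfun (i : 'I_N) (t : R) : R := t * tpt (val i).+1 + (1 - t) * tpt (val i).

Definition sword (sigma : seq 'I_N) : R -> R :=
  foldr (fun i g => sfun i \o g) id sigma.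
Definition Sword (sigma : seq 'I_N) : V -> V :=
  foldr (fun i g => S i \o g) id sigma.

Definition phi0 (a b : V) (t : R) : V := a + t *: (b - a).

(* f is phi_k : phi_k = S_sigma o phi_0 o s_sigma^{-1} on s_sigma([0,1]), |sigma| = k *)
Definition hutchinson_approx (a b : V) (k : nat) (f : R -> V) : Prop :=
  forall sigma : seq 'I_N, size sigma = k ->
    forall x, x \in `[0, 1] -> f (sword sigma x) = Sword sigma (phi0 a b x).

Definition hutchinson_param (a b : V) (phi : R -> V) : Prop :=
  exists phik : nat -> R -> V,
    (forall k, hutchinson_approx a b k (phik k)) /\
    (forall e : R, 0 < e -> exists K : nat, forall k, (K <= k)%N ->
       forall t, t \in `[0, 1] -> edist (phik k t) (phi t) < e).

End Defs.

From Pilot Require Import Defs.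
From HB Require Import structures.
From mathcomp Require Import all_boot all_order all_algebra.
From mathcomp Require Import all_classical all_reals all_analysis.
From mathcomp Require Import ring lra.
Set Implicit Arguments. Unset Strict Implicit. Unset Printing Implicit Defensive.
Import Order.TTheory GRing.Theory Num.Theory.
Import numFieldNormedType.Exports.
Local Open Scope classical_set_scope.
Local Open Scope ring_scope.
(* mathcomp-analysis has its own [edist] (an extended pseudometric); here it is the
   Euclidean distance of Defs. *)
Local Notation edist := Defs.edist.

(* Write F(u, v) for H^s(phi([u, v])) and h for H^s(gamma), which is finite because
   the k-fold images of gamma under the maps S_i cover it with diameters at most
   (max r_i)^k diam gamma and weights summing to 1.  The limit parameterization satisfies
   phi (s_i x) = S_i (phi x) and phi([0, 1]) = gamma.  As S_i scales H^s by r_i^s, the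
   length of s_i([0, 1]), the excess F(u, v) - h (v - u) of an arc inside one piece is
   r_i^s times the excess of its preimage; cutting an arbitrary arc at the points t_i
   bounds the excess of arcs ending at 0 or 1, and then of all arcs, by a multiple of
   (max r_i^s)^k for every k, so F(u, v) <= h (v - u).  Subadditivity over
   [0, u], [u, v], [v, 1] gives the reverse inequality. *)

Section EuclideanDistance.
Context {R : realType} {n : nat}.
Implicit Types (x y z : 'rV[R]_n) (A : set 'rV[R]_n).

Lemma edist_ge0 x y : 0 <= edist x y.
Proof. exact: sqrtr_ge0. Qed.

Lemma edistC x y : edist x y = edist y x.
Proof. by rewrite /edist; congr Num.sqrt; apply: eq_bigr => i _; rewrite -sqrrN opprB. Qed.

Lemma edistxx x : edist x x = 0.
Proof. by rewrite /edist big1 ?sqrtr0 // => i _; rewrite subrr expr0n. Qed.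

Lemma coord_le_edist x y i : `|x ord0 i - y ord0 i| <= edist x y.
Proof.
rewrite /edist -sqrtr_sqr ler_sqrt; last by apply: sumr_ge0 => j _; rewrite sqr_ge0.
by rewrite (bigD1 i) //= lerDl sumr_ge0 // => j _; rewrite sqr_ge0.
Qed.

Lemma coord_le_normr (v : 'rV[R]_n) i : `|v ord0 i| <= `|v|.
Proof.
rewrite [leRHS]/Num.Def.normr /= mx_normrE.
by apply/bigmax_geP; right; exists (ord0, i).
Qed.

Lemma normr_le_edist x y : `|x - y| <= edist x y.
Proof.
rewrite [leLHS]/Num.Def.normr /= mx_normrE.
apply: bigmax_le => [|[i j] _]; first exact: edist_ge0.
by rewrite (ord1 i) !mxE coord_le_edist.
Qed.

Lemma edist_le_normr x y : edist x y <= Num.sqrt n%:R * `|x - y|.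
Proof.
have -> : `|x - y| = Num.sqrt (`|x - y| ^+ 2) by rewrite sqrtr_sqr normr_id.
rewrite -sqrtrM // ler_sqrt ?mulr_ge0 ?sqr_ge0 //.
apply: (@le_trans _ _ (\sum_(i < n) `|x - y| ^+ 2)); last first.
  by rewrite sumr_const card_ord mulr_natl.
apply: ler_sum => i _; rewrite -real_normK ?num_real // lerXn2r ?nnegrE //.
by have := coord_le_normr (x - y) i; rewrite !mxE.
Qed.

Lemma normr_le_edistD x y z : `|x - z| <= edist x y + edist y z.
Proof.
have -> : x - z = (x - y) + (y - z) by rewrite addrA subrK.
by apply: (le_trans (ler_normD _ _)); rewrite lerD ?normr_le_edist.
Qed.

Lemma closed_edist_approx A x : closed A ->
  (forall e, 0 < e -> exists y z, A z /\ edist x y < e /\ edist y z < e) -> A x.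
Proof.
move=> clA approx; rewrite (closure_id A).1 // => B /nbhs_ballP[e e0 eB].
have [y [z [Az [xy yz]]]] := approx (e / 2) (divr_gt0 e0 (ltr0Sn _ 1)).
exists z; split => //; apply: eB; rewrite -ball_normE /=.
by rewrite (le_lt_trans (normr_le_edistD x y z)) // [e]splitr ltrD.
Qed.

Lemma edist_approx_eq x z :
  (forall e, 0 < e -> exists y, edist x y < e /\ edist y z < e) -> x = z.
Proof.
move=> approx; apply: (@closed_edist_approx [set z]) => [|e e0].
  exact/accessible_closed_set1/hausdorff_accessible/norm_hausdorff.
by have [y xyz] := approx e e0; exists y, z.
Qed.

Lemma ediam_le A d : (forall x y, A x -> A y -> edist x y <= d) -> (ediam A <= d%:E)%E.
Proof. by move=> Ad; apply: ge_ereal_sup => _ [x [y [Ax [Ay ->]]]]; rewrite lee_fin Ad. Qed.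

Lemma edist_le_ediam A x y : A x -> A y -> ((edist x y)%:E <= ediam A)%E.
Proof. by move=> Ax Ay; apply: ereal_sup_ubound; exists x, y. Qed.

Lemma ediam_set0 : ediam (@set0 'rV[R]_n) = -oo%E.
Proof.
rewrite /ediam (_ : [set z | _] = set0) ?ereal_sup0 //.
by apply/seteqP; split => z //= [x [y [[]]]].
Qed.

Lemma ediam_set1 x : ediam [set x] = 0%E.
Proof.
rewrite /ediam (_ : [set z | _] = [set 0%:E]) ?ereal_sup1 //.
apply/seteqP; split => z /=.
- by move=> [_ [_ [-> [-> ->]]]]; rewrite edistxx.
- by move=> ->; exists x, x; rewrite edistxx.
Qed.

End EuclideanDistance.

Lemma nneseries_ub (R : realType) (f : nat -> \bar R) (c : \bar R) :
  (forall k, 0 <= f k)%E -> (forall m, \sum_(0 <= k < m) f k <= c)%E ->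
  (\sum_(0 <= k <oo) f k <= c)%E.
Proof.
move=> f0 partial_le; apply: lime_le; last exact: nearW.
by apply: is_cvg_nneseries => k _ _; exact: f0.
Qed.

Lemma le_mule_ereal_inf (R : realType) (E : set (\bar R)) (x : \bar R) (c : R) :
  0 < c -> (forall y, E y -> x <= c%:E * y)%E -> (x <= c%:E * ereal_inf E)%E.
Proof.
move=> c0 xE; rewrite -lee_pdivrMl //; apply: le_ereal_inf_tmp => y Ey.
by rewrite lee_pdivrMl // xE.
Qed.

Section HausdorffMeasure.
Context {R : realType} {n : nat} (s : R).
Hypothesis s_gt0 : 0 < s.
Local Notation V := 'rV[R]_n.
Local Notation content := (@hausdorff_content R n s).
Local Notation measure := (@hausdorff_measure R n s).
Implicit Types (A B : set V) (U : nat -> set V).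

Definition diam_pow A : \bar R := ((fine (ediam A)) `^ s)%:E.

Lemma diam_pow_ge0 A : (0 <= diam_pow A)%E.
Proof. by rewrite lee_fin powR_ge0. Qed.

Lemma diam_pow_set0 : diam_pow set0 = 0%E.
Proof. by rewrite /diam_pow ediam_set0 /= powR0 // gt_eqF. Qed.

Lemma diam_pow_set1 (x : V) : diam_pow [set x] = 0%E.
Proof. by rewrite /diam_pow ediam_set1 /= powR0 // gt_eqF. Qed.

Lemma hausdorff_content_ge0 d A : (0 <= content d A)%E.
Proof.
apply: le_ereal_inf_tmp => _ [U _ <-]; apply: nneseries_ge0 => k _ _.
exact: diam_pow_ge0.
Qed.

Lemma hausdorff_content_le_cover d A U : A `<=` \bigcup_k U k ->
  (forall k, ediam (U k) <= d%:E)%E ->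
  (content d A <= \sum_(0 <= k <oo) diam_pow (U k))%E.
Proof. by move=> AU Ud; apply: ereal_inf_lbound; exists U. Qed.

Lemma le_hausdorff_content d A B : A `<=` B -> (content d A <= content d B)%E.
Proof.
move=> AB; apply: le_ereal_inf_tmp => _ [U [BU Ud] <-].
exact: hausdorff_content_le_cover (subset_trans AB BU) Ud.
Qed.

Lemma hausdorff_content_le_diam_pow d A : (ediam A <= d%:E)%E -> (content d A <= diam_pow A)%E.
Proof.
move=> Ad; pose U k : set V := if k is 0%N then A else set0.
have AU : A `<=` \bigcup_k U k by move=> x Ax; exists 0%N.
have Ud k : (ediam (U k) <= d%:E)%E by case: k => [|k] //=; rewrite ediam_set0 leNye.
apply: le_trans (hausdorff_content_le_cover AU Ud) _.
rewrite (nneseries_split 0 1) => [|k _]; last exact: diam_pow_ge0.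
by rewrite big_nat1 eseries0 ?adde0 // => -[|k] // _ _; rewrite diam_pow_set0.
Qed.

Lemma hausdorff_content_set1 d (x : V) : 0 <= d -> content d [set x] = 0%E.
Proof.
move=> d0; apply/le_anti; rewrite hausdorff_content_ge0 andbT -(diam_pow_set1 x).
by apply: hausdorff_content_le_diam_pow; rewrite ediam_set1 lee_fin.
Qed.

(* Interleave near-optimal covers of [A] and [B] into one cover of [A `|` B]. *)
Lemma hausdorff_contentU_le d A B :
  (content d (A `|` B) <= content d A + content d B)%E.
Proof.
have not_ninfty C : content d C != -oo%E.
  by rewrite gt_eqF // (lt_le_trans _ (hausdorff_content_ge0 d C)) // ltNy0.
have [Afin|Ainf] := boolP (content d A \is a fin_num); last first.
  by move: Ainf; rewrite fin_numE not_ninfty /= negbK => /eqP ->; rewrite addye ?leey.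
have [Bfin|Binf] := boolP (content d B \is a fin_num); last first.
  by move: Binf; rewrite fin_numE not_ninfty /= negbK => /eqP ->; rewrite addey ?leey.
apply/lee_addgt0Pr => e e0.
have e2 : 0 < e / 2 by rewrite divr_gt0.
have [_ [U [AU Ud] <-] Uopt] := lb_ereal_inf_adherent e2 Afin.
have [_ [W [BW Wd] <-] Wopt] := lb_ereal_inf_adherent e2 Bfin.
pose Z k := if odd k then W k./2 else U k./2.
have Zeven k : Z k.*2 = U k by rewrite /Z odd_double half_double.
have Zodd k : Z k.*2.+1 = W k by rewrite /Z /= odd_double /= uphalf_double.
apply: (le_trans (hausdorff_content_le_cover (U := Z) _ _)).
- move=> x [/AU [k _ Ux]|/BW [k _ Wx]].
  + by exists k.*2; rewrite ?Zeven.
  + by exists k.*2.+1; rewrite ?Zodd.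
- by move=> k; rewrite /Z; case: (odd k).
apply: nneseries_ub => [k|m]; first exact: diam_pow_ge0.
apply: (@le_trans _ _ (\sum_(0 <= k < m.*2) diam_pow (Z k))%E).
  apply: (@lee_sum_nneg_natr _ _ xpredT) => [k _ _|]; first exact: diam_pow_ge0.
  by rewrite -addnn leq_addr.
have -> : (\sum_(0 <= k < m.*2) diam_pow (Z k) =
           \sum_(0 <= k < m) (diam_pow (U k) + diam_pow (W k)))%E.
  elim: m => [|m IH]; first by rewrite !big_geq.
  by rewrite doubleS !big_nat_recr //= IH Zeven Zodd addeA.
rewrite big_split /=.
apply: (le_trans (leeD (nneseries_lim_ge _ (fun k _ _ => diam_pow_ge0 (U k)))
                       (nneseries_lim_ge _ (fun k _ _ => diam_pow_ge0 (W k))))).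
apply: (le_trans (leeD (ltW Uopt) (ltW Wopt))).
move: (fineK Afin) (fineK Bfin); rewrite /hausdorff_content.
move: (ereal_inf _) (ereal_inf _) => cA cB <- <-.
by rewrite -!EFinD lee_fin [e in _ + e]splitr; lra.
Qed.

Lemma hausdorff_content_big_setU_le (I : eqType) d (l : seq I) (A : I -> set V) :
  0 <= d -> (content d [set x | exists2 i, i \in l & A i x] <=
             \sum_(i <- l) content d (A i))%E.
Proof.
move=> d0; elim: l => [|i l IH].
  rewrite big_nil -(hausdorff_content_set1 0 d0).
  by apply: le_hausdorff_content => x [].
rewrite big_cons; apply: le_trans (leeD2l _ IH).
apply: le_trans (hausdorff_contentU_le _ _ _); apply: le_hausdorff_content.
move=> x [j]; rewrite in_cons => /orP[/eqP -> Ax|jl Ax]; [left|right] => //.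
by exists j.
Qed.

Lemma hausdorff_content_image_le d c A (f : V -> V) : 0 < c -> 0 <= d ->
  (forall x y, A x -> A y -> edist (f x) (f y) <= c * edist x y) ->
  (content (c * d) (f @` A) <= (c `^ s)%:E * content d A)%E.
Proof.
move=> c0 d0 f_lip; apply: le_mule_ereal_inf; first by rewrite powR_gt0.
move=> _ [U [AU Ud] <-].
pose Z k := f @` (U k `&` A).
suff Zk k : (ediam (Z k) <= (c * d)%:E /\ diam_pow (Z k) <= (c `^ s)%:E * diam_pow (U k))%E.
  apply: (le_trans (hausdorff_content_le_cover (U := Z) _ _)).
  - by move=> _ [x Ax <-]; have [k _ Ux] := AU x Ax; exists k => //; exists x.
  - by move=> k; exact: (Zk k).1.
  rewrite -nneseriesZl; last by move=> k _; exact: diam_pow_ge0.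
  by apply: lee_nneseries => [k _ _|k _]; [exact: diam_pow_ge0 | exact: (Zk k).2].
have [[x [Ux Ax]]|UA0] := pselect (exists x, U k x /\ A x); last first.
  have -> : Z k = set0.
    by apply/seteqP; split => // y [x [Ux Ax] _]; apply: UA0; exists x.
  by rewrite ediam_set0 diam_pow_set0 leNye mule_ge0 ?diam_pow_ge0 // lee_fin powR_ge0.
have U0 : (0 <= ediam (U k))%E.
  by apply: le_trans (edist_le_ediam Ux Ux); rewrite lee_fin edist_ge0.
have Ufin : ediam (U k) \is a fin_num by rewrite ge0_fin_numE // (le_lt_trans (Ud k)) ?ltry.
have ZU : (ediam (Z k) <= (c * fine (ediam (U k)))%:E)%E.
  apply: ediam_le => _ _ [y [Uy Ay] <-] [z [Uz Az] <-].
  apply: (le_trans (f_lip _ _ Ay Az)); rewrite ler_pM2l // -lee_fin fineK //.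
  exact: edist_le_ediam.
split; first by apply: (le_trans ZU); rewrite lee_fin ler_pM2l // -lee_fin fineK.
have Z0 : (0 <= ediam (Z k))%E.
  have Zfx : Z k (f x) by exists x.
  by apply: le_trans (edist_le_ediam Zfx Zfx); rewrite lee_fin edist_ge0.
have Zfin : ediam (Z k) \is a fin_num by rewrite ge0_fin_numE // (le_lt_trans ZU) ?ltry.
rewrite /diam_pow -EFinM lee_fin -powRM ?(ltW c0) ?fine_ge0 //.
apply: ge0_ler_powR; rewrite ?(ltW s_gt0) ?nnegrE ?fine_ge0 ?mulr_ge0 ?(ltW c0) ?fine_ge0 //.
exact: fine_le Zfin _ ZU.
Qed.

Lemma hausdorff_measure_ge0 A : (0 <= measure A)%E.
Proof.
apply: le_trans (hausdorff_content_ge0 1 A) _.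
by apply: ereal_sup_ubound; exists 1 => //=; exact: ltr01.
Qed.

Lemma hausdorff_content_le_measure d A : 0 < d -> (content d A <= measure A)%E.
Proof. by move=> d0; apply: ereal_sup_ubound; exists d. Qed.

Lemma le_hausdorff_measure A B : A `<=` B -> (measure A <= measure B)%E.
Proof.
move=> AB; apply: ge_ereal_sup => _ [d d0 <-].
exact: le_trans (le_hausdorff_content d AB) (hausdorff_content_le_measure B d0).
Qed.

Lemma hausdorff_measureU_le A B : (measure (A `|` B) <= measure A + measure B)%E.
Proof.
apply: ge_ereal_sup => _ [d d0 <-]; apply: le_trans (hausdorff_contentU_le d A B) _.
by apply: leeD; exact: hausdorff_content_le_measure.
Qed.

Lemma hausdorff_measure_image_le c A (f : V -> V) : 0 < c ->
  (forall x y, A x -> A y -> edist (f x) (f y) <= c * edist x y) ->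
  (measure (f @` A) <= (c `^ s)%:E * measure A)%E.
Proof.
move=> c0 f_lip; apply: ge_ereal_sup => _ [d d0 <-].
have dc0 : 0 < d / c by rewrite divr_gt0.
have -> : d = c * (d / c) by rewrite mulrC divfK // gt_eqF.
apply: le_trans (hausdorff_content_image_le c0 (ltW dc0) f_lip) _.
apply: lee_wpmul2l; first by rewrite lee_fin powR_ge0.
exact: hausdorff_content_le_measure.
Qed.

Lemma hausdorff_measure_set1 (x : V) : measure [set x] = 0%E.
Proof.
apply/le_anti; rewrite hausdorff_measure_ge0 andbT.
by apply: ge_ereal_sup => _ [d d0 <-]; rewrite hausdorff_content_set1 // ltW.
Qed.

End HausdorffMeasure.

Lemma geometric_lt_eventually (R : realType) (q B e : R) :
  0 <= q < 1 -> 0 <= B -> 0 < e -> exists m, forall k, (m <= k)%N -> q ^+ k * B < e.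
Proof.
move=> /andP[q0 q1] B0 e0.
have eB : 0 < e / (B + 1) by rewrite divr_gt0 // ltr_wpDl.
have q1' : `|q| < 1 by rewrite ger0_norm.
have [m _ small] := cvgr0_norm_lt _ (cvg_expr q1') _ eB.
exists m => k mk; have := small k mk; rewrite /= ger0_norm ?exprn_ge0 // => qk.
apply: le_lt_trans (_ : q ^+ k * (B + 1) < e).
  by rewrite ler_wpM2l ?exprn_ge0 // lerDl.
by rewrite -ltr_pdivlMr // ltr_wpDl.
Qed.

Lemma geometric_bound_le0 (R : realType) (q C x : R) : 0 <= q < 1 -> 0 <= C ->
  (forall m, x <= C * q ^+ m) -> x <= 0.
Proof.
move=> q01 C0 xC; apply/ler_addgt0Pr => e e0; rewrite add0r.
have [m small] := geometric_lt_eventually q01 C0 e0.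
by apply: le_trans (xC m) _; rewrite mulrC ltW // small.
Qed.

Lemma bigmax_ratio (R : realType) N (f : 'I_N -> R) : (forall i, 0 < f i < 1) ->
  [/\ 0 <= \big[Order.max/0]_i f i, \big[Order.max/0]_i f i < 1
    & forall i, f i <= \big[Order.max/0]_i f i].
Proof.
move=> f01; split; first exact: bigmax_ge_id.
- by apply: bigmax_lt => // i _; have /andP[] := f01 i.
- by move=> i; exact: le_bigmax.
Qed.

Section HutchinsonTime.
Context {R : realType} {N : nat} (r : 'I_N -> R) (s : R).
Hypothesis r_gt0 : forall i, 0 < r i.
Hypothesis sum_rs : \sum_(i < N) r i `^ s = 1.
Local Notation t := (tpt r s).
Local Notation rho i := (r i `^ s).
Local Notation sfun := (Defs.sfun r s).
Local Notation sword := (Defs.sword r s).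

Lemma rho_gt0 i : 0 < rho i. Proof. by rewrite powR_gt0. Qed.

Lemma N_gt0 : (0 < N)%N.
Proof.
rewrite lt0n; apply/negP => /eqP N0.
have : \sum_(i < N) r i `^ s = 0.
  by apply: big1 => i _; have := ltn_ord i; rewrite [X in (_ < X)%N -> _]N0.
by rewrite sum_rs => /eqP; rewrite oner_eq0.
Qed.

Lemma tpt0 : t 0 = 0.
Proof. by rewrite /tpt big_pred0. Qed.

Lemma tptS (i : 'I_N) : t i.+1 = t i + rho i.
Proof.
rewrite /tpt (bigD1 i) //= addrC; congr (_ + _); apply: eq_bigl => j.
rewrite ltnS leq_eqVlt -(inj_eq val_inj) /=.
by case: (ltngtP j i) => //= _; rewrite andbT.
Qed.

Lemma tptN : t N = 1.
Proof. by rewrite /tpt -sum_rs; apply: eq_bigl => j; rewrite ltn_ord. Qed.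

Lemma tpt_le m k : (m <= k)%N -> t m <= t k.
Proof.
move=> mk; rewrite /tpt [leRHS]big_mkcond [leLHS]big_mkcond /=.
apply: ler_sum => j _; case: ifP => jm; last by case: ifP => _; rewrite ?powR_ge0.
by rewrite (leq_trans jm mk).
Qed.

Lemma tpt_ge0 m : 0 <= t m.
Proof. by rewrite -tpt0 tpt_le. Qed.

Lemma tpt_le1 m : t m <= 1.
Proof.
rewrite -sum_rs /tpt [leLHS]big_mkcond /=.
by apply: ler_sum => j _; case: ifP => _; rewrite ?powR_ge0.
Qed.

Lemma sfunE (i : 'I_N) x : sfun i x = t i + rho i * x.
Proof. by rewrite /Defs.sfun tptS; ring. Qed.

Lemma ler_sfun (i : 'I_N) x y : (sfun i x <= sfun i y) = (x <= y).
Proof. by rewrite !sfunE lerD2l ler_pM2l ?rho_gt0. Qed.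

Lemma sfun01 (i : 'I_N) x : 0 <= x <= 1 -> 0 <= sfun i x <= 1.
Proof.
move=> /andP[x0 x1]; rewrite sfunE addr_ge0 ?mulr_ge0 ?tpt_ge0 ?powR_ge0 //=.
apply: le_trans (tpt_le1 i.+1); rewrite tptS lerD2l.
by rewrite ler_piMr ?powR_ge0.
Qed.

Lemma sfun0 (i : 'I_N) : sfun i 0 = t i.
Proof. by rewrite sfunE mulr0 addr0. Qed.

Lemma sfun1 (i : 'I_N) : sfun i 1 = t i.+1.
Proof. by rewrite sfunE mulr1 tptS. Qed.

Lemma sfun_onto_itv (i : 'I_N) u v x : sfun i u <= x <= sfun i v ->
  exists2 y, u <= y <= v & x = sfun i y.
Proof.
move=> /andP[ux xv]; have x_sfun : x = sfun i ((x - t i) / rho i).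
  by rewrite sfunE mulrC divfK ?gt_eqF ?rho_gt0 //; ring.
exists ((x - t i) / rho i); last exact: x_sfun.
by rewrite -(ler_sfun i) -x_sfun ux -(ler_sfun i) -x_sfun.
Qed.

Lemma sfun_onto (i : 'I_N) x : t i <= x <= t i.+1 -> exists2 y, 0 <= y <= 1 & x = sfun i y.
Proof. by rewrite -sfun0 -sfun1; exact: sfun_onto_itv. Qed.

Lemma exists_piece x : 0 <= x <= 1 -> exists i : 'I_N, t i <= x <= t i.+1.
Proof.
move=> /andP[x0 x1].
suff piece m : (m < N)%N -> x <= t m.+1 -> exists i : 'I_N, t i <= x <= t i.+1.
  by apply: (piece N.-1); rewrite ?prednK ?N_gt0 ?tptN // ltn_predL N_gt0.
elim: m => [|m IH] mN xm; first by exists (Ordinal mN); rewrite /= tpt0 x0.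
have [tx|xt] := leP (t m.+1) x; first by exists (Ordinal mN); rewrite tx.
by apply: IH; [exact: ltn_trans mN | exact: ltW].
Qed.

Lemma sword_onto k x : 0 <= x <= 1 ->
  exists sigma, size sigma = k /\ exists2 y, 0 <= y <= 1 & x = sword sigma y.
Proof.
elim: k x => [|k IH] x x01; first by exists [::]; split => //; exists x.
have [i /sfun_onto[x' x'01 ->]] := exists_piece x01.
have [sigma [<- [y y01 ->]]] := IH _ x'01.
by exists (i :: sigma); split => //; exists y.
Qed.

Lemma swordE sigma : exists2 L, 0 < L & forall y, sword sigma y = sword sigma 0 + L * y.
Proof.
elim: sigma => [|i sigma [L L0 IH]]; first by exists 1 => // y; rewrite /= mul1r add0r.
exists (rho i * L); first by rewrite mulr_gt0 ?rho_gt0.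
by move=> y; rewrite /= IH !sfunE mulrDr addrA mulrA.
Qed.

Lemma ler_sword sigma x y : x <= y -> sword sigma x <= sword sigma y.
Proof. by move=> xy; have [L L0 E] := swordE sigma; rewrite (E x) (E y) lerD2l ler_pM2l. Qed.

Lemma sword_onto_itv sigma x : sword sigma 0 <= x <= sword sigma 1 ->
  exists2 y, 0 <= y <= 1 & x = sword sigma y.
Proof.
have [L L0 E] := swordE sigma; rewrite (E 1) mulr1 => /andP[x0 x1].
exists ((x - sword sigma 0) / L); last by rewrite E mulrC divfK ?gt_eqF //; ring.
by rewrite divr_ge0 ?subr_ge0 ?(ltW L0) //= ler_pdivrMr // mul1r lerBlDl.
Qed.

Lemma sword_rcons sigma i x : sword (rcons sigma i) x = sword sigma (sfun i x).
Proof. by elim: sigma => //= j sigma ->. Qed.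

(* The intervals [sword (mkseq w k) @` [0, 1]] are nested, so their left endpoints have a
   supremum lying in all of them. *)
Lemma sword_nested_point (w : nat -> 'I_N) : exists2 x, 0 <= x <= 1 &
  forall k, exists2 y, 0 <= y <= 1 & x = sword (mkseq w k) y.
Proof.
pose lo k := sword (mkseq w k) 0; pose hi k := sword (mkseq w k) 1.
have lo_nd : nondecreasing_seq lo.
  apply/nondecreasing_seqP => k; rewrite /lo mkseqS sword_rcons.
  by apply: ler_sword; rewrite sfun0 tpt_ge0.
have hi_ni : nonincreasing_seq hi.
  apply/nonincreasing_seqP => k; rewrite /hi mkseqS sword_rcons.
  by apply: ler_sword; rewrite sfun1 tpt_le1.
have lo_hi j k : lo j <= hi k.
  have [jk|kj] := leqP j k.
    by apply: le_trans (lo_nd _ _ jk) _; apply: ler_sword.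
  by apply: le_trans (hi_ni _ _ (ltnW kj)); apply: ler_sword.
have lo_ub : has_sup (range lo).
  by split; [exists (lo 0), 0 | exists (hi 0) => _ [j _ <-]; exact: lo_hi].
have between k : lo k <= sup (range lo) <= hi k.
  apply/andP; split; first by apply: sup_upper_bound => //; exists k.
  by apply: ge_sup => [|_ [j _ <-]]; [exact: lo_ub.1 | exact: lo_hi].
exists (sup (range lo)); first exact: between 0%N.
by move=> k; apply: sword_onto_itv; exact: between.
Qed.

End HutchinsonTime.

Section Attractor.
Context {R : realType} {n N : nat}.
Local Notation V := 'rV[R]_n.
Variables (S : 'I_N -> V -> V) (r : 'I_N -> R) (gamma : set V).
Hypothesis r01 : forall i, 0 < r i < 1.
Hypothesis S_sim : forall i, similarity (S i) (r i).
Hypothesis gamma_inv : IFS_invariant S gamma.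
Local Notation Sword := (Defs.Sword S).

Let rmax := \big[Order.max/0]_i r i.

Lemma edist_Sword sigma x y :
  edist (Sword sigma x) (Sword sigma y) <= rmax ^+ size sigma * edist x y.
Proof.
have [rmax0 _ r_le] := bigmax_ratio r01.
elim: sigma => [|i sigma IH] /=; first by rewrite expr0 mul1r.
have /andP[/ltW ri0 _] := r01 i.
by rewrite S_sim exprS -mulrA ler_pM ?r_le // edist_ge0.
Qed.

Lemma Sword_rcons sigma i x : Sword (rcons sigma i) x = Sword sigma (S i x).
Proof. by elim: sigma => //= j sigma ->. Qed.

Lemma Sword_gamma sigma x : gamma x -> gamma (Sword sigma x).
Proof.
have [_ [_ gammaE]] := gamma_inv; elim: sigma => //= i sigma IH gx.
by rewrite [X in X _]gammaE; exists i => //; exists (Sword sigma x) => //; exact: IH.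
Qed.

Lemma gamma_bounded : exists2 M, 0 <= M & forall x, gamma x -> `|x| <= M.
Proof.
have [_ [/compact_bounded[M [_ MB]] _]] := gamma_inv.
exists (`|M| + 1); first by rewrite addr_ge0.
by move=> x gx; apply: (MB (`|M| + 1)) => //; rewrite (le_lt_trans (ler_norm M)) ?ltrDl.
Qed.

Lemma gamma_edist_bounded :
  exists2 D, 0 <= D & forall x y, gamma x -> gamma y -> edist x y <= D.
Proof.
have [M M0 xM] := gamma_bounded.
exists (Num.sqrt n%:R * (M + M)); first by rewrite mulr_ge0 ?sqrtr_ge0 ?addr_ge0.
move=> x y gx gy; apply: le_trans (edist_le_normr x y) _.
by rewrite ler_wpM2l ?sqrtr_ge0 // (le_trans (ler_normB _ _)) ?lerD ?xM.
Qed.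

Lemma gamma_address g : gamma g ->
  exists w : nat -> 'I_N, forall k, exists2 p, gamma p & g = Sword (mkseq w k) p.
Proof.
move=> gg; have [_ [_ gammaE]] := gamma_inv.
have [i0 _ _] : (\bigcup_i (S i @` gamma)) g by rewrite -gammaE.
have preimage (x : V) : exists ix : 'I_N * V, gamma x -> gamma ix.2 /\ x = S ix.1 ix.2.
  have [gx|ngx] := pselect (gamma x); last by exists (i0, x) => /ngx.
  by move: gx; rewrite {1}gammaE => -[i _ [y gy <-]]; exists (i, y).
have [f f_pre] := choice preimage.
pose p k := iter k (fun x => (f x).2) g.
have gp k : gamma (p k) by elim: k => //= k IH; exact: (f_pre _ IH).1.
exists (fun k => (f (p k)).1) => k; exists (p k) => //.
elim: k => // k IH; rewrite mkseqS Sword_rcons {1}IH; congr Sword.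
exact: (f_pre _ (gp k)).2.
Qed.

Variable s : R.
Hypothesis s_gt0 : 0 < s.
Hypothesis sum_rs : \sum_(i < N) r i `^ s = 1.

Lemma hausdorff_content_attractor_le D k d :
  (forall x y, gamma x -> gamma y -> edist x y <= D) -> 0 <= D -> D * rmax ^+ k <= d ->
  (hausdorff_content s d gamma <= (D `^ s)%:E)%E.
Proof.
move=> gD D0; have [rmax0 _ r_le] := bigmax_ratio r01.
elim: k d => [|k IH] d Dd.
  rewrite expr0 mulr1 in Dd; apply: le_trans (hausdorff_content_le_diam_pow s_gt0 _) _.
    exact: ediam_le (fun x y gx gy => le_trans (gD x y gx gy) Dd).
  have [[x gx] _] := gamma_inv.
  have diam0 : (0 <= ediam gamma)%E.
    by apply: le_trans (edist_le_ediam gx gx); rewrite lee_fin edist_ge0.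
  rewrite lee_fin ge0_ler_powR ?nnegrE ?fine_ge0 ?(ltW s_gt0) // -lee_fin fineK.
    exact: ediam_le.
  by rewrite ge0_fin_numE // (le_lt_trans (ediam_le gD)) ?ltry.
have d0 : 0 <= d by apply: le_trans Dd; rewrite mulr_ge0 ?exprn_ge0.
have [_ [_ gammaE]] := gamma_inv.
have cover : gamma `<=` [set x | exists2 i, i \in index_enum 'I_N & (S i @` gamma) x].
  by move=> x; rewrite {1}gammaE => -[i _ Sx]; exists i; rewrite ?mem_index_enum.
apply: le_trans (le_hausdorff_content s d cover) _.
apply: le_trans (hausdorff_content_big_setU_le s_gt0 _ _ d0) _.
apply: le_trans (_ : \sum_(i <- index_enum 'I_N) ((r i `^ s)%:E * (D `^ s)%:E) <= _)%E.
  apply: lee_sum => i _; have /andP[ri0 _] := r01 i.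
  have -> : d = r i * (d / r i) by rewrite mulrC divfK ?gt_eqF.
  apply: le_trans (hausdorff_content_image_le s_gt0 ri0 _ _) _.
  - exact: divr_ge0 d0 (ltW ri0).
  - by move=> x y _ _; rewrite S_sim.
  apply: lee_wpmul2l; first by rewrite lee_fin powR_ge0.
  apply: IH; rewrite ler_pdivlMr //; apply: le_trans Dd.
  by rewrite exprSr mulrA ler_wpM2l ?mulr_ge0 ?exprn_ge0 ?r_le.
under eq_bigr do rewrite -EFinM.
by rewrite sumEFin -big_distrl /= sum_rs mul1r.
Qed.

Lemma hausdorff_measure_attractor_fin_num : hausdorff_measure s gamma \is a fin_num.
Proof.
have [D D0 gD] := gamma_edist_bounded.
have [rmax0 rmax1 _] := bigmax_ratio r01.
rewrite ge0_fin_numE ?hausdorff_measure_ge0 //; apply: le_lt_trans (ltry (D `^ s)).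
apply: ge_ereal_sup => _ [d d0 <-].
have rmax01 : 0 <= rmax < 1 by rewrite rmax0.
have [k Dk] := geometric_lt_eventually rmax01 D0 d0.
by apply: (hausdorff_content_attractor_le (k := k) gD D0); rewrite mulrC ltW ?Dk.
Qed.

Local Notation sfun := (Defs.sfun r s).
Local Notation sword := (Defs.sword r s).
Let r_gt0 i : 0 < r i. Proof. by have /andP[] := r01 i. Qed.

Variables (a b : V) (phi : R -> V) (phik : nat -> R -> V).
Hypothesis phik_approx : forall k, hutchinson_approx S r s a b k (phik k).
Hypothesis phik_cvg : forall e, 0 < e -> exists K, forall k, (K <= k)%N ->
  forall t, t \in `[0, 1] -> edist (phik k t) (phi t) < e.

Lemma phik_Sword_near : exists2 B, 0 <= B & forall k sigma y p,
  size sigma = k -> 0 <= y <= 1 -> gamma p ->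
  edist (phik k (sword sigma y)) (Sword sigma p) <= rmax ^+ k * B.
Proof.
have [rmax0 _ _] := bigmax_ratio r01; have [M M0 gM] := gamma_bounded.
exists (Num.sqrt n%:R * (`|a| + `|b - a| + M)).
  by rewrite mulr_ge0 ?sqrtr_ge0 ?addr_ge0.
move=> k sigma y p <- /andP[y0 y1] gp; rewrite phik_approx ?in_itv /= ?y0 ?y1 //.
apply: le_trans (edist_Sword _ _ _) _; rewrite ler_wpM2l ?exprn_ge0 //.
apply: le_trans (edist_le_normr _ _) _; rewrite ler_wpM2l ?sqrtr_ge0 //.
have yba : `|y *: (b - a)| <= `|b - a| by rewrite normrZ ger0_norm // ler_piMl.
rewrite /phi0; apply: le_trans (ler_normB _ _) _; rewrite lerD ?gM //.
by apply: le_trans (ler_normD _ _) _; rewrite lerD2l.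
Qed.

Lemma phik_eventually_near e : 0 < e -> exists k,
  (forall t, 0 <= t <= 1 -> edist (phi t) (phik k t) < e) /\
  forall sigma y p, size sigma = k -> 0 <= y <= 1 -> gamma p ->
    edist (phik k (sword sigma y)) (Sword sigma p) < e.
Proof.
move=> e0; have [B B0 near] := phik_Sword_near.
have [rmax0 rmax1 _] := bigmax_ratio r01; have rmax01 : 0 <= rmax < 1 by rewrite rmax0.
have [K1 K1e] := phik_cvg e0; have [K2 K2e] := geometric_lt_eventually rmax01 B0 e0.
exists (maxn K1 K2); split => [t t01|sigma y p size_sigma y01 gp].
  by rewrite edistC K1e ?in_itv ?leq_maxl.
by apply: le_lt_trans (near _ _ _ _ size_sigma y01 gp) _; rewrite K2e ?leq_maxr.
Qed.

Lemma phi_sfun i x : 0 <= x <= 1 -> phi (sfun i x) = S i (phi x).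
Proof.
move=> x01; apply: edist_approx_eq => e e0.
have [K close] := phik_cvg e0.
have [sigma [size_sigma [y y01 xE]]] := sword_onto r_gt0 sum_rs K x01.
exists (phik K.+1 (sfun i x)); split.
  by rewrite edistC close ?in_itv ?sfun01.
have -> : phik K.+1 (sfun i x) = S i (phik K x).
  rewrite xE -[sfun i _]/(sword (i :: sigma) y).
  by rewrite !phik_approx ?in_itv //= size_sigma.
have /andP[ri0 ri1] := r01 i.
rewrite S_sim (le_lt_trans _ (close K (leqnn K) x _)) ?in_itv //.
by rewrite ler_piMl ?edist_ge0 ?ltW.
Qed.

Lemma phi_gamma x : 0 <= x <= 1 -> gamma (phi x).
Proof.
move=> x01; have [[g gg] [gamma_compact _]] := gamma_inv.
apply: closed_edist_approx => [|e e0].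
  by apply: compact_closed gamma_compact; exact: norm_hausdorff.
have [k [phi_near image_near]] := phik_eventually_near e0.
have [sigma [size_sigma [y y01 xE]]] := sword_onto r_gt0 sum_rs k x01.
exists (phik k x), (Sword sigma g); split; first exact: Sword_gamma.
by rewrite phi_near // xE image_near.
Qed.

Lemma gamma_phi g : gamma g -> exists2 x, 0 <= x <= 1 & phi x = g.
Proof.
move=> gg; have [w gw] := gamma_address gg.
have [x x01 xw] := sword_nested_point r_gt0 sum_rs w.
exists x => //; apply: edist_approx_eq => e e0.
have [k [phi_near image_near]] := phik_eventually_near e0.
have [y y01 xE] := xw k; have [p gp gE] := gw k.
exists (phik k x); split; first exact: phi_near.
by rewrite {1}xE [X in edist _ X]gE image_near ?size_mkseq.
Qed.

Lemma phi_image : phi @` `[0, 1] = gamma.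
Proof.
apply/seteqP; split => [_ [x + <-]|g /gamma_phi[x x01 <-]].
  by rewrite /= in_itv => /phi_gamma.
by exists x; rewrite //= in_itv.
Qed.

End Attractor.

Section ArcMeasure.
Context {R : realType} {n N : nat}.
Local Notation V := 'rV[R]_n.
Variables (S : 'I_N -> V -> V) (r : 'I_N -> R) (s : R) (phi : R -> V).
Hypothesis r01 : forall i, 0 < r i < 1.
Hypothesis S_sim : forall i, similarity (S i) (r i).
Hypothesis s_gt0 : 0 < s.
Hypothesis sum_rs : \sum_(i < N) r i `^ s = 1.
Local Notation t := (tpt r s).
Local Notation rho i := (r i `^ s).
Local Notation sfun := (Defs.sfun r s).
Hypothesis phi_selfsimilar : forall i x, 0 <= x <= 1 -> phi (sfun i x) = S i (phi x).
Local Notation H := (hausdorff_measure s).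
Local Notation arc u v := (phi @` `[u, v]).
Hypothesis curve_fin : H (arc 0 1) \is a fin_num.

Let r_gt0 i : 0 < r i. Proof. by have /andP[] := r01 i. Qed.
Let h := fine (H (arc 0 1)).
Let rhomax := \big[Order.max/0]_i rho i.

Lemma rho01 i : 0 < rho i < 1.
Proof.
have /andP[r0 r1] := r01 i; rewrite powR_gt0 //=.
by have := gt0_ltr_powR s_gt0 (ltW r0 : 0 <= r i) (ler01 : (0:R) <= 1) r1; rewrite powR1.
Qed.

Lemma h_ge0 : 0 <= h.
Proof. by rewrite fine_ge0 ?hausdorff_measure_ge0. Qed.

Lemma rho_mul_le i k : rho i * (h * rhomax ^+ k) <= h * rhomax ^+ k.+1.
Proof.
have [rhomax0 _ rho_le] := bigmax_ratio rho01.
by rewrite mulrC exprSr mulrA ler_wpM2l ?mulr_ge0 ?exprn_ge0 ?h_ge0 ?rho_le.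
Qed.

Definition arc_bound u v c := (H (arc u v) <= (h * (v - u) + c)%:E)%E.

Lemma le_arc_bound u v c c' : c <= c' -> arc_bound u v c -> arc_bound u v c'.
Proof. by move=> cc' /le_trans; apply; rewrite lee_fin lerD2l. Qed.

Lemma hausdorff_measure_arc_split u v w : (H (arc u w) <= H (arc u v) + H (arc v w))%E.
Proof.
apply: le_trans (hausdorff_measureU_le _ _ _); apply: le_hausdorff_measure.
move=> _ [x + <-]; rewrite /= in_itv /= => /andP[ux xw].
have [xv|/ltW vx] := leP x v; [left|right]; exists x => //.
  by rewrite /= in_itv /= ux xv.
by rewrite /= in_itv /= vx xw.
Qed.

Lemma arc_bound_trans u v w c1 c2 :
  arc_bound u v c1 -> arc_bound v w c2 -> arc_bound u w (c1 + c2).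
Proof.
move=> uv vw; apply: le_trans (hausdorff_measure_arc_split u v w) _.
by apply: le_trans (leeD uv vw) _; rewrite -EFinD lee_fin; lra.
Qed.

Lemma arc_bound_point u : arc_bound u u 0.
Proof.
have sub : arc u u `<=` [set phi u].
  by move=> _ [x + <-]; rewrite /= in_itv /= => /le_anti ->.
apply: le_trans (le_hausdorff_measure s sub) _.
by rewrite hausdorff_measure_set1 // lee_fin subrr mulr0 addr0.
Qed.

Lemma arc_bound01 : arc_bound 0 1 0.
Proof. by rewrite /arc_bound subr0 mulr1 addr0 fineK. Qed.

Lemma arc_bound_h u v : 0 <= u -> u <= v -> v <= 1 -> arc_bound u v h.
Proof.
move=> u0 uv v1; have sub : arc u v `<=` arc 0 1.
  move=> _ [x + <-]; rewrite /= in_itv /= => /andP[ux xv].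
  by exists x; rewrite //= in_itv /= (le_trans u0 ux) (le_trans xv v1).
apply: le_trans (le_hausdorff_measure s sub) _.
by rewrite -[X in (X <= _)%E]fineK // lee_fin lerDr mulr_ge0 ?h_ge0 ?subr_ge0.
Qed.

Lemma arc_bound_sfun i u v c : 0 <= u -> v <= 1 ->
  arc_bound u v c -> arc_bound (sfun i u) (sfun i v) (rho i * c).
Proof.
move=> u0 v1 uv; rewrite /arc_bound.
have sub : arc (sfun i u) (sfun i v) `<=` S i @` arc u v.
  move=> _ [x + <-]; rewrite /= in_itv /= => /(sfun_onto_itv r_gt0)[y /andP[uy yv] ->].
  rewrite phi_selfsimilar; last by rewrite (le_trans u0 uy) (le_trans yv v1).
  by exists (phi y) => //; exists y; rewrite //= in_itv /= uy.
apply: le_trans (le_hausdorff_measure _ sub) _.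
apply: le_trans (hausdorff_measure_image_le s_gt0 (r_gt0 i) _) _.
  by move=> x y _ _; rewrite S_sim.
apply: le_trans (lee_wpmul2l _ uv) _; first by rewrite lee_fin powR_ge0.
by rewrite -EFinM lee_fin !sfunE; lra.
Qed.

Lemma arc_bound_tpt p q : (p <= q)%N -> (q <= N)%N -> arc_bound (t p) (t q) 0.
Proof.
elim: q => [|q IH]; first by rewrite leqn0 => /eqP-> _; exact: arc_bound_point.
rewrite leq_eqVlt => /orP[/eqP-> _|pq qN]; first exact: arc_bound_point.
have := arc_bound_sfun (Ordinal qN) (lexx 0) (lexx 1) arc_bound01.
rewrite sfun0 sfun1 mulr0 => last_piece.
by rewrite -[0]addr0; exact: arc_bound_trans (IH pq (ltnW qN)) last_piece.
Qed.

Lemma arc_bound_right_piece (i : 'I_N) u c : t i <= u <= t i.+1 ->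
  (forall u', 0 <= u' <= 1 -> arc_bound u' 1 c) -> arc_bound u (t i.+1) (rho i * c).
Proof.
move=> /(sfun_onto r_gt0)[u' u'01 ->] right_bound.
by rewrite -sfun1; apply: arc_bound_sfun (right_bound u' u'01); case/andP: u'01.
Qed.

Lemma arc_bound_left_piece (j : 'I_N) v c : t j <= v <= t j.+1 ->
  (forall v', 0 <= v' <= 1 -> arc_bound 0 v' c) -> arc_bound (t j) v (rho j * c).
Proof.
move=> /(sfun_onto r_gt0)[v' v'01 ->] left_bound.
by rewrite -sfun0; apply: arc_bound_sfun (left_bound v' v'01); case/andP: v'01.
Qed.

Lemma arc_bound_right k u : 0 <= u <= 1 -> arc_bound u 1 (h * rhomax ^+ k).
Proof.
elim: k u => [|k IH] u u01.
  by rewrite expr0 mulr1; case/andP: u01 => u0 u1; apply: arc_bound_h.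
have [i ui] := exists_piece sum_rs u01.
have tail := arc_bound_tpt (ltn_ord i) (leqnn N); rewrite (tptN sum_rs) in tail.
apply: le_arc_bound (arc_bound_trans (arc_bound_right_piece ui IH) tail).
by rewrite addr0 rho_mul_le.
Qed.

Lemma arc_bound_left k v : 0 <= v <= 1 -> arc_bound 0 v (h * rhomax ^+ k).
Proof.
elim: k v => [|k IH] v v01.
  by rewrite expr0 mulr1; case/andP: v01 => v0 v1; apply: arc_bound_h.
have [j vj] := exists_piece sum_rs v01.
have head := arc_bound_tpt (leq0n j) (ltnW (ltn_ord j)); rewrite tpt0 in head.
apply: le_arc_bound (arc_bound_trans head (arc_bound_left_piece vj IH)).
by rewrite add0r rho_mul_le.
Qed.

Lemma arc_bound_general k u v : 0 <= u -> u <= v -> v <= 1 ->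
  arc_bound u v ((h * rhomax ^+ k) *+ 2).
Proof.
elim: k u v => [|k IH] u v u0 uv v1.
  apply: le_arc_bound (arc_bound_h u0 uv v1).
  by rewrite expr0 mulr1 mulr2n lerDl h_ge0.
have u01 : 0 <= u <= 1 by rewrite u0 (le_trans uv v1).
have v01 : 0 <= v <= 1 by rewrite v1 (le_trans u0 uv).
have [i ui] := exists_piece sum_rs u01; have [j vj] := exists_piece sum_rs v01.
have [vi|iv] := leP v (t i.+1).
  have /(sfun_onto r_gt0)[v' /andP[_ v'1] vE] : t i <= v <= t i.+1.
    by rewrite vi (le_trans _ uv) //; case/andP: ui.
  have [u' /andP[u'0 _] uE] := sfun_onto r_gt0 ui.
  rewrite uE vE in uv *; rewrite ler_sfun // in uv.
  apply: le_arc_bound (arc_bound_sfun i u'0 v'1 (IH _ _ u'0 uv v'1)).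
  by rewrite mulrnAr lerMn2r rho_mul_le orbT.
have ij : (i < j)%N.
  rewrite ltnNge; apply/negP => ji.
  by have := lt_le_trans iv (andP vj).2; rewrite ltNge tpt_le.
have head := arc_bound_right_piece ui (arc_bound_right k).
have tail := arc_bound_left_piece vj (arc_bound_left k).
have mid := arc_bound_tpt ij (ltnW (ltn_ord j)).
apply: le_arc_bound (arc_bound_trans (arc_bound_trans head mid) tail).
by rewrite addr0 mulr2n lerD ?rho_mul_le.
Qed.

Lemma hausdorff_measure_arc_fin_num u v : 0 <= u -> u <= v -> v <= 1 ->
  H (arc u v) \is a fin_num.
Proof.
move=> u0 uv v1; rewrite ge0_fin_numE ?hausdorff_measure_ge0 //.
by apply: le_lt_trans (arc_bound_h u0 uv v1) _; rewrite ltry.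
Qed.

Lemma hausdorff_measure_arc_le u v : 0 <= u -> u <= v -> v <= 1 ->
  (H (arc u v) <= (h * (v - u))%:E)%E.
Proof.
move=> u0 uv v1; have [rhomax0 rhomax1 _] := bigmax_ratio rho01.
have arc_fin := hausdorff_measure_arc_fin_num u0 uv v1.
rewrite -(fineK arc_fin) lee_fin -subr_le0.
apply: (@geometric_bound_le0 _ rhomax (h *+ 2)); rewrite ?rhomax0 ?mulrn_wge0 ?h_ge0 //.
move=> k; have := arc_bound_general k u0 uv v1.
by rewrite /arc_bound -(fineK arc_fin) lee_fin !mulr2n mulrDl; lra.
Qed.

Lemma hausdorff_measure_arc u v : 0 <= u -> u <= v -> v <= 1 ->
  H (arc u v) = (h * (v - u))%:E.
Proof.
move=> u0 uv v1; apply/le_anti; rewrite hausdorff_measure_arc_le //=.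
have v0 := le_trans u0 uv; have u1 := le_trans uv v1.
have split3 := le_trans (hausdorff_measure_arc_split 0 u 1)
  (leeD2l _ (hausdorff_measure_arc_split u v 1)).
have lhs := hausdorff_measure_arc_le (lexx 0) u0 u1.
have rhs := hausdorff_measure_arc_le v0 v1 (lexx 1).
have := le_trans split3 (leeD lhs (leeD2l _ rhs)).
rewrite -(fineK curve_fin) -/h -(fineK (hausdorff_measure_arc_fin_num u0 uv v1)).
by rewrite -!EFinD !lee_fin; lra.
Qed.

End ArcMeasure.

Unset Implicit Arguments.
Unset Strict Implicit.

Theorem corollary5p4 (R : realType) (n N : nat)
    (S : 'I_N -> 'rV[R]_n -> 'rV[R]_n) (r : 'I_N -> R)
    (gamma : set 'rV[R]_n) (a b : 'rV[R]_n) (s : R) (phi : R -> 'rV[R]_n) :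
  (2 <= N)%N ->
  (forall i, 0 < r i < 1) ->
  (forall i, similarity (S i) (r i)) ->
  IFS_invariant S gamma ->
  IFS_quasiarc S gamma a b ->
  0 < s -> \sum_(i < N) (r i) `^ s = 1 ->
  hutchinson_param S r s a b phi ->
  forall u v : R, u \in `[0, 1] -> v \in `[0, 1] -> u <= v ->
    hausdorff_measure s (phi @` `[u, v]) =
      (hausdorff_measure s gamma * (`|u - v|)%:E)%E.
Proof.
move=> _ r01 S_sim gamma_inv _ s_gt0 sum_rs [phik [phik_approx phik_cvg]] u v.
rewrite !in_itv /= => /andP[u0 _] /andP[_ v1] uv.
have curve := phi_image r01 S_sim gamma_inv sum_rs phik_approx phik_cvg.
have self_similar := phi_sfun r01 S_sim sum_rs phik_approx phik_cvg.
have fin := hausdorff_measure_attractor_fin_num r01 S_sim gamma_inv s_gt0 sum_rs.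
rewrite -curve in fin *.
rewrite (hausdorff_measure_arc r01 S_sim s_gt0 sum_rs self_similar fin u0 uv v1).
by rewrite EFinM fineK // distrC ger0_norm ?subr_ge0.
Qed.
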